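(* Let $0\le a<b$, let $\alpha\in(0,1)$, and let $k:[a,b]\to\mathbb{R}$ be a continuous nonnegative map, differentiable on $[a,b]$, with $k(t)\neq 0$ and $k'(t)\neq 0$. Let $f:[a,b]\to\mathbb{R}$ be a continuous function such that $I^{\alpha}(f)$ exists. Then for all $t\in(a,b)$, $$D^{\alpha}\left[I^{\alpha}(f)\right](t)=f(t).$$
   Context: The $\alpha$-generalized fractional integral of $f$ is $I^{\alpha}(f)(t)=\int_a^t \frac{k'(x)f(x)}{(k(x))^{1-\alpha}}\,dx$ (as a possibly improper Riemann integral). For a function $F$ defined near $t\in(a,b)$ the generalized fractional derivative of order $\alpha$ is $$D^{\alpha}(F)(t):=\lim_{\varepsilon\to 0}\frac{F\left(t-k(t)+k(t)\,e^{\varepsilon\frac{(k(t))^{-\alpha}}{k'(t)}}\right)-F(t)}{\varepsilon}.$$ *)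

From Stdlib Require Import Reals.
From Coquelicot Require Import Coquelicot.
Open Scope R_scope.

Definition continuous_on_cc (f : R -> R) (a b : R) : Prop :=
  forall x, a <= x <= b ->
    filterlim f (within (fun y => a <= y <= b) (locally x)) (locally (f x)).

Definition has_derivative_on_cc (k dk : R -> R) (a b : R) : Prop :=
  forall x, a <= x <= b ->
    filterlim (fun y => (k y - k x) / (y - x))
      (within (fun y => a <= y <= b /\ y <> x) (locally x)) (locally (dk x)).

Definition Ialpha_integrand (k dk : R -> R) (alpha : R) (f : R -> R) (x : R) : R :=
  dk x * f x / Rpower (k x) (1 - alpha).

(* v = I^alpha(f)(t) = \int_a^t k'(x) f(x) / k(x)^(1-alpha) dx, as a (possibly
   improper at a) Riemann integral: v = lim_{s -> a+} \int_s^t ... . *)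
Definition is_Ialpha (k dk : R -> R) (alpha : R) (f : R -> R) (a t v : R) : Prop :=
  is_RInt_gen (Ialpha_integrand k dk alpha f) (at_right a) (at_point t) v.

Definition Dalpha_point (k dk : R -> R) (alpha t eps : R) : R :=
  t - k t + k t * exp (eps * Rpower (k t) (- alpha) / dk t).

Definition is_Dalpha (k dk : R -> R) (alpha : R) (F : R -> R) (t l : R) : Prop :=
  is_lim (fun eps => (F (Dalpha_point k dk alpha t eps) - F t) / eps) 0 l.

From Stdlib Require Import Reals Lra Lia ClassicalEpsilon.
From Coquelicot Require Import Coquelicot.
Open Scope R_scope.

(* Write h := f / k^(1-alpha), so that F q - F p = \int_p^q k' h.  Since k' never
   vanishes it keeps a constant sign (at a maximum of k on [p, q] the sign of k'
   would otherwise force k to exceed its maximum), so k is strictly monotone.  Tagging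
   the cells of a Riemann sum at mean-value points of k turns each k'(c)(y - x) into
   k(y) - k(x); by monotonicity these increments add up in absolute value, whence
   |F u - F t - h(t)(k u - k t)| <= sup |h - h(t)| * |k u - k t| although k' alone
   need not be integrable.  By continuity of h, (F u - F t) / (k u - k t) -> h(t),
   so F'(t) = h(t) k'(t); and for differentiable F the chain rule gives
   D^alpha F(t) = k(t)^(1-alpha) F'(t) / k'(t) = f(t). *)

Lemma within_nbhd_weaken (x : R) (D P Q S : R -> Prop) :
  locally x D -> (forall y, D y -> P y -> Q y) ->
  within Q (locally x) S -> within P (locally x) S.
Proof.
  unfold within. intros HD HPQ HQ. generalize (filter_and _ _ HD HQ). apply filter_imp.
  intros y [Hy H] HP. exact (H (HPQ y Hy HP)).
Qed.

Lemma locally_oo (a b x : R) : a < x < b -> locally x (fun y => a < y < b).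
Proof.
  intros Hx. apply (locally_interval _ x a b); simpl; try lra.
  intros y Ha Hb; simpl in *; lra.
Qed.

Lemma locally_cc (a b x : R) : a < x < b -> locally x (fun y => a <= y <= b).
Proof.
  intros Hx. apply (filter_imp (fun y => a < y < b)); [intros y Hy; lra |].
  exact (locally_oo a b x Hx).
Qed.

Lemma continuous_on_cc_interior (f : R -> R) (a b x : R) :
  continuous_on_cc f a b -> a < x < b -> continuous f x.
Proof.
  intros Hf Hx S HS. unfold filtermap.
  generalize (filter_and _ _ (locally_cc a b x Hx) (Hf x ltac:(lra) S HS)).
  apply filter_imp. intros y [Hy H]. exact (H Hy).
Qed.

Lemma is_derive_iff_is_lim_quotient (f : R -> R) (x l : R) :
  is_derive f x l <-> is_lim (fun y => (f y - f x) / (y - x)) x l.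
Proof.
  rewrite is_derive_Reals, is_lim_Reals. split.
  - intros H eps Heps. destruct (H eps Heps) as [d Hd].
    exists d. split; [apply cond_pos |]. intros y [Hyx Hy]. simpl in *. unfold R_dist in *.
    replace y with (x + (y - x)) at 1 by ring. apply Hd; lra.
  - intros H eps Heps. destruct (H eps Heps) as [d [Hd0 Hd]].
    exists (mkposreal d Hd0). intros h Hh Hhd. simpl in *.
    specialize (Hd (x + h)). unfold R_dist in Hd.
    replace (x + h - x) with h in Hd by ring. apply Hd. split; [lra | exact Hhd].
Qed.

Lemma has_derivative_on_cc_interior (k dk : R -> R) (a b x : R) :
  has_derivative_on_cc k dk a b -> a < x < b -> is_derive k x (dk x).
Proof.
  intros Hk Hx. apply is_derive_iff_is_lim_quotient. intros S HS.
  apply (within_nbhd_weaken x (fun y => a <= y <= b) _ (fun y => a <= y <= b /\ y <> x)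
           _ (locally_cc a b x Hx)).
  - tauto.
  - exact (Hk x ltac:(lra) S HS).
Qed.

Lemma is_derive_increment_sign (K : R -> R) (x d : R) :
  is_derive K x d -> d <> 0 ->
  exists del, 0 < del /\ forall h, h <> 0 -> Rabs h < del -> 0 < (K (x + h) - K x) * h * d.
Proof.
  intros HK Hd. apply is_derive_Reals in HK.
  destruct (HK (Rabs d) (Rabs_pos_lt d Hd)) as [del Hdel].
  exists del. split; [apply cond_pos |]. intros h Hh Hhd.
  specialize (Hdel h Hh Hhd).
  set (r := (K (x + h) - K x) / h) in Hdel.
  replace ((K (x + h) - K x) * h * d) with (r * d * (h * h)) by (unfold r; field; exact Hh).
  apply Rmult_lt_0_compat; [| exact (Rsqr_pos_lt h Hh)].
  destruct (Rlt_or_le 0 d) as [Hd0|Hd0].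
  - rewrite (Rabs_pos_eq d) in Hdel by lra. apply Rabs_def2 in Hdel. nra.
  - assert (d < 0) by lra.
    rewrite (Rabs_left d) in Hdel by lra. apply Rabs_def2 in Hdel. nra.
Qed.

Lemma is_derive_nonzero_no_sign_change (K dK : R -> R) (p q : R) :
  p < q -> (forall x, p <= x <= q -> is_derive K x (dK x)) ->
  (forall x, p <= x <= q -> dK x <> 0) -> 0 < dK p -> 0 < dK q.
Proof.
  intros Hpq HK Hne Hp. apply Rnot_le_lt. intros Hq.
  assert (Hq' : dK q < 0) by (specialize (Hne q ltac:(lra)); lra).
  destruct (continuity_ab_maj K p q ltac:(lra)) as [m [Hmax Hm]].
  { intros x Hx. apply derivable_continuous_pt.
    exists (dK x). apply is_derive_Reals, HK, Hx. }
  destruct (is_derive_increment_sign K m (dK m) (HK m Hm) (Hne m Hm)) as [del [Hdel Hinc]].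
  assert (Hh : exists h, h <> 0 /\ Rabs h < del /\ p <= m + h <= q /\ 0 < h * dK m).
  { destruct (Rlt_dec 0 (dK m)) as [Hpos|Hneg].
    - assert (m < q) by (destruct (Req_dec m q) as [->|]; lra).
      assert (H1 := Rmin_l (del / 2) (q - m)). assert (H2 := Rmin_r (del / 2) (q - m)).
      assert (0 < Rmin (del / 2) (q - m)) by (apply Rmin_glb_lt; lra).
      exists (Rmin (del / 2) (q - m)). rewrite Rabs_pos_eq by lra.
      repeat split; try lra. nra.
    - assert (Hneg' : dK m < 0) by (specialize (Hne m Hm); lra).
      assert (p < m) by (destruct (Req_dec m p) as [->|]; lra).
      assert (H1 := Rmin_l (del / 2) (m - p)). assert (H2 := Rmin_r (del / 2) (m - p)).
      assert (0 < Rmin (del / 2) (m - p)) by (apply Rmin_glb_lt; lra).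
      exists (- Rmin (del / 2) (m - p)). rewrite Rabs_Ropp, Rabs_pos_eq by lra.
      repeat split; try lra. nra. }
  destruct Hh as [h [Hh0 [Hhd [Hmh Hsgn]]]].
  specialize (Hinc h Hh0 Hhd). specialize (Hmax (m + h) Hmh). nra.
Qed.

Lemma is_derive_nonzero_sign_const (K dK : R -> R) (p q : R) :
  p <= q -> (forall x, p <= x <= q -> is_derive K x (dK x)) ->
  (forall x, p <= x <= q -> dK x <> 0) -> 0 < dK p * dK q.
Proof.
  intros Hpq HK Hne.
  destruct (Rle_lt_or_eq_dec p q Hpq) as [Hlt | <-].
  2: { apply Rsqr_pos_lt, Hne; lra. }
  destruct (Rlt_or_le 0 (dK p)) as [Hp | Hp].
  - assert (0 < dK q) by exact (is_derive_nonzero_no_sign_change K dK p q Hlt HK Hne Hp).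
    nra.
  - assert (Hp' : dK p < 0) by (specialize (Hne p ltac:(lra)); lra).
    assert (0 < - dK q).
    { apply (is_derive_nonzero_no_sign_change (fun x => - K x) (fun x => - dK x) p q Hlt).
      - intros x Hx. apply (is_derive_opp K x (dK x)), HK, Hx.
      - intros x Hx. specialize (Hne x Hx). lra.
      - lra. }
    nra.
Qed.

Section TaggedBound.

Variables (g w v : R -> R) (p q : R).

Definition good_tag (x y c : R) : Prop :=
  x <= c <= y /\ Rabs ((y - x) * g c - (w y - w x)) <= v y - v x.

Lemma Riemann_sum_tagged_bound (c : R -> R -> R) (x : R) (l : list R) :
  (forall y z, p <= y <= z -> z <= q -> good_tag y z (c y z)) ->
  sorted Rle (x :: l) -> p <= x -> seq.last x l <= q ->
  Rabs (Riemann_sum g (SF_seq_f2 c (x :: l)) - (w (seq.last x l) - w x))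
    <= v (seq.last x l) - v x.
Proof.
  intros Hc; revert x; induction l as [|y l IH]; intros x Hsort Hpx Hlq.
  - simpl. change (@zero R_ModuleSpace) with 0.
    rewrite !Rminus_diag. replace (0 - 0) with 0 by ring. rewrite Rabs_R0. lra.
  - destruct Hsort as [Hxy Hsort].
    assert (Hyl : y <= seq.last y l)
      by exact (sorted_last (y :: l) 0 Hsort ltac:(simpl; lia) y).
    simpl in Hlq |- *.
    rewrite SF_cons_f2, Riemann_sum_cons by (simpl; lia).
    destruct (Hc x y ltac:(lra) ltac:(lra)) as [_ Hxy'].
    specialize (IH y Hsort ltac:(lra) Hlq).
    change (Rabs ((y - x) * g (c x y) + Riemann_sum g (SF_seq_f2 c (y :: l))
                  - (w (seq.last y l) - w x)) <= v (seq.last y l) - v x).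
    set (S := Riemann_sum g (SF_seq_f2 c (y :: l))) in *.
    replace ((y - x) * g (c x y) + S - (w (seq.last y l) - w x))
      with (((y - x) * g (c x y) - (w y - w x)) + (S - (w (seq.last y l) - w y))) by ring.
    eapply Rle_trans; [apply Rabs_triang | lra].
Qed.

Hypothesis tag_exists : forall x y, p <= x <= y -> y <= q -> exists c, good_tag x y c.

Lemma is_RInt_tagged_bound (I : R) :
  p <= q -> is_RInt g p q I -> Rabs (I - (w q - w p)) <= v q - v p.
Proof.
  intros Hpq HI.
  destruct (Rle_lt_or_eq_dec p q Hpq) as [Hlt | <-].
  2: { rewrite <- (is_RInt_unique _ _ _ _ HI), RInt_point, !Rminus_diag.
       change (@zero R_NormedModule) with 0.
       rewrite Rabs_R0. apply Rle_refl. }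
  set (c := fun x y => epsilon (inhabits 0)
              (fun c => x <= c <= y /\ (p <= x -> y <= q -> good_tag x y c))).
  assert (Hc : forall x y, x <= y -> x <= c x y <= y /\ (p <= x -> y <= q -> good_tag x y (c x y))).
  { intros x y Hxy. apply epsilon_spec.
    destruct (Rle_dec p x) as [Hx|Hx]; [destruct (Rle_dec y q) as [Hy|Hy]|].
    - destruct (tag_exists x y ltac:(lra) Hy) as [c0 Hc0].
      exists c0. split; [apply Hc0 | tauto].
    - exists x. split; [lra | tauto].
    - exists x. split; [lra | tauto]. }
  apply Rle_plus_epsilon. intros eps Heps.
  destruct (HI (ball I (mkposreal _ Heps)) (locally_ball _ _)) as [d Hd].
  destruct (seq_step_unif_part_ex p q d) as [n Hn].
  destruct (Riemann_fine_unif_part c p q n (fun x y Hxy => proj1 (Hc x y Hxy)) Hpq)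
    as [_ [Hptd [Hhead Hlast]]].
  destruct (unif_part p q n) as [|x l] eqn:E.
  { pose proof (head_unif_part (p + 1) p q n) as H. rewrite E in H. simpl in H. lra. }
  rewrite SF_lx_f2 in Hlast by (simpl; lia).
  assert (Hx : x = p) by (pose proof (head_unif_part 0 p q n) as H; rewrite E in H; exact H).
  assert (Hl : seq.last x l = q)
    by (pose proof (last_unif_part 0 p q n) as H; rewrite E in H; exact H).
  subst x.
  assert (Hsort : sorted Rle (p :: l)) by (rewrite <- E; apply unif_part_sort; lra).
  assert (HS := Riemann_sum_tagged_bound c p l
                  (fun y z Hy Hz => proj2 (Hc y z (proj2 Hy)) (proj1 Hy) Hz)
                  Hsort (Rle_refl p) ltac:(lra)).
  rewrite Hl in HS.
  specialize (Hd (SF_seq_f2 c (p :: l))).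
  rewrite SF_lx_f2 in Hd by (simpl; lia).
  specialize (Hd Hn).
  rewrite Rmin_left, Rmax_right, sign_eq_1 in Hd by lra.
  specialize (Hd (conj Hptd (conj Hhead Hlast))).
  change (Rabs (1 * Riemann_sum g (SF_seq_f2 c (p :: l)) - I) < eps) in Hd.
  rewrite Rmult_1_l in Hd.
  set (S := Riemann_sum g (SF_seq_f2 c (p :: l))) in *.
  replace (I - (w q - w p)) with ((S - (w q - w p)) - (S - I)) by ring.
  eapply Rle_trans; [apply Rabs_triang |]. rewrite Rabs_Ropp. lra.
Qed.

End TaggedBound.

Lemma is_RInt_gen_at_right_RInt (g : R -> R) (a t l : R) :
  is_RInt_gen g (at_right a) (at_point t) l ->
  at_right a (fun s => ex_RInt g s t) /\
  filterlim (fun s => RInt g s t) (at_right a) (locally l).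
Proof.
  intros H. split.
  - destruct (H (fun _ => True) (filter_true)) as [Q Qt HQ HQt Hp].
    apply (filter_imp Q); [| exact HQ].
    intros s Hs. destruct (Hp s t Hs HQt) as [y [Hy _]]. exists y. exact Hy.
  - intros P HP. unfold filtermap. destruct (H P HP) as [Q Qt HQ HQt Hp].
    apply (filter_imp Q); [| exact HQ].
    intros s Hs. destruct (Hp s t Hs HQt) as [y [Hy HPy]]. simpl in Hy.
    rewrite (is_RInt_unique _ _ _ _ Hy). exact HPy.
Qed.

Lemma is_RInt_of_is_RInt_gen_at_right (g : R -> R) (a t u lt lu : R) :
  is_RInt_gen g (at_right a) (at_point t) lt ->
  is_RInt_gen g (at_right a) (at_point u) lu ->
  is_RInt g t u (lu - lt).
Proof.
  intros Ht Hu.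
  destruct (is_RInt_gen_at_right_RInt g a t lt Ht) as [Et Lt].
  destruct (is_RInt_gen_at_right_RInt g a u lu Hu) as [Eu Lu].
  assert (Hev : at_right a (fun s => ex_RInt g t u /\ RInt g s u - RInt g s t = RInt g t u)).
  { apply (filter_imp (fun s => ex_RInt g s t /\ ex_RInt g s u)); [| exact (filter_and _ _ Et Eu)].
    intros s [Hst Hsu]. split.
    - exact (ex_RInt_Chasles g t s u (ex_RInt_swap _ _ _ Hst) Hsu).
    - rewrite <- (RInt_Chasles g t s u (ex_RInt_swap _ _ _ Hst) Hsu), <- (opp_RInt_swap g s t Hst).
      change (RInt g s u - RInt g s t = - RInt g s t + RInt g s u). ring. }
  destruct (filter_ex (F := at_right a) _ Hev) as [s [Hex _]].
  replace (lu - lt) with (RInt g t u); [exact (RInt_correct g t u Hex) |].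
  apply (filterlim_locally_unique (F := at_right a) (fun _ => RInt g t u));
    [apply filterlim_const |].
  apply (filterlim_ext_loc (fun s => RInt g s u - RInt g s t)).
  - apply (filter_imp _ _ (fun s Hs => proj2 Hs) Hev).
  - apply (filterlim_comp_2 (fun s => RInt g s u) (fun s => - RInt g s t) Rplus
             (G := locally lu) (H := locally (- lt))); [exact Lu | |].
    + eapply filterlim_comp; [exact Lt | apply (filterlim_opp lt)].
    + apply (filterlim_plus lu (- lt)).
Qed.

Section DerivativeNonvanishing.

Variables (k dk : R -> R) (a b : R).
Hypothesis k_derive : forall x, a < x < b -> is_derive k x (dk x).
Hypothesis dk_neq0 : forall x, a < x < b -> dk x <> 0.

Lemma k_increment_mvt (x y : R) : a < x -> x < y -> y < b ->
  exists c, x < c < y /\ k y - k x = dk c * (y - x).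
Proof.
  intros Hx Hxy Hy.
  destruct (MVT_cor2 k dk x y Hxy) as [c [Hc Hcxy]].
  - intros c Hc. apply is_derive_Reals, k_derive. lra.
  - exists c. split; assumption.
Qed.

Lemma dk_sign_const (x y : R) : a < x < b -> a < y < b -> 0 < dk x * dk y.
Proof.
  intros Hx Hy.
  assert (Hle : forall p q, a < p < b -> a < q < b -> p <= q -> 0 < dk p * dk q).
  { intros p q Hp Hq Hpq. apply (is_derive_nonzero_sign_const k dk p q Hpq).
    - intros z Hz. apply k_derive. lra.
    - intros z Hz. apply dk_neq0. lra. }
  destruct (Rle_dec x y) as [Hxy | Hxy].
  - exact (Hle x y Hx Hy Hxy).
  - rewrite Rmult_comm. apply Hle; lra.
Qed.

Lemma k_injective (x y : R) : a < x < b -> a < y < b -> x <> y -> k x <> k y.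
Proof.
  intros Hx Hy Hxy Heq.
  destruct (Rlt_or_le x y) as [Hlt | Hle].
  - destruct (k_increment_mvt x y ltac:(lra) Hlt ltac:(lra)) as [c [Hc Hkc]].
    apply (dk_neq0 c ltac:(lra)). nra.
  - destruct (k_increment_mvt y x ltac:(lra) ltac:(lra) ltac:(lra)) as [c [Hc Hkc]].
    apply (dk_neq0 c ltac:(lra)). nra.
Qed.

Lemma k_increment_abs (x y z : R) : a < x -> x <= y -> y < b -> a < z < b ->
  Rabs (k y - k x) = sign (dk z) * (k y - k x).
Proof.
  intros Hx Hxy Hy Hz.
  assert (Hsgn : 0 <= (k y - k x) * dk z).
  { destruct (Rle_lt_or_eq_dec x y Hxy) as [Hlt | <-]; [| lra].
    destruct (k_increment_mvt x y Hx Hlt Hy) as [c [Hc ->]].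
    assert (0 < dk c * dk z) by (apply dk_sign_const; lra). nra. }
  destruct (Rlt_or_le 0 (dk z)) as [Hpos | Hneg].
  - rewrite sign_eq_1, Rmult_1_l by exact Hpos. apply Rabs_pos_eq. nra.
  - assert (dk z < 0) by (specialize (dk_neq0 z Hz); lra).
    rewrite sign_eq_m1 by assumption. rewrite Rabs_left1 by nra. ring.
Qed.

Lemma RInt_dk_mul_estimate_le (h : R -> R) (h0 eta p q I : R) :
  a < p -> p <= q -> q < b ->
  (forall x, p <= x <= q -> Rabs (h x - h0) <= eta) ->
  is_RInt (fun x => dk x * h x) p q I ->
  Rabs (I - h0 * (k q - k p)) <= eta * Rabs (k q - k p).
Proof.
  intros Hp Hpq Hq Hh HI.
  rewrite (k_increment_abs p q p) by lra.
  set (s := sign (dk p)).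
  replace (h0 * (k q - k p)) with (h0 * k q - h0 * k p) by ring.
  replace (eta * (s * (k q - k p))) with (eta * s * k q - eta * s * k p) by ring.
  apply (is_RInt_tagged_bound (fun x => dk x * h x) (fun x => h0 * k x)
           (fun x => eta * s * k x) p q); [| exact Hpq | exact HI].
  intros x y Hxy Hyq. unfold good_tag.
  destruct (Rle_lt_or_eq_dec x y (proj2 Hxy)) as [Hlt | <-].
  - destruct (k_increment_mvt x y ltac:(lra) Hlt ltac:(lra)) as [c [Hc Hkc]].
    exists c. split; [lra |].
    replace ((y - x) * (dk c * h c) - (h0 * k y - h0 * k x)) with ((k y - k x) * (h c - h0))
      by (replace (k y) with (k x + dk c * (y - x)) by lra; ring).
    replace (eta * s * k y - eta * s * k x) with (eta * (s * (k y - k x))) by ring.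
    unfold s. rewrite <- (k_increment_abs x y p) by lra.
    rewrite Rabs_mult, Rmult_comm. apply Rmult_le_compat_r; [apply Rabs_pos | apply Hh; lra].
  - exists x. split; [lra |].
    rewrite !Rminus_diag, Rmult_0_l, Rminus_diag, Rabs_R0. lra.
Qed.

Lemma RInt_dk_mul_estimate (h : R -> R) (h0 eta p q I : R) :
  a < p < b -> a < q < b ->
  (forall x, Rmin p q <= x <= Rmax p q -> Rabs (h x - h0) <= eta) ->
  is_RInt (fun x => dk x * h x) p q I ->
  Rabs (I - h0 * (k q - k p)) <= eta * Rabs (k q - k p).
Proof.
  intros Hp Hq Hh HI.
  destruct (Rle_or_lt p q) as [Hpq | Hqp].
  - rewrite Rmin_left, Rmax_right in Hh by lra.
    exact (RInt_dk_mul_estimate_le h h0 eta p q I ltac:(lra) Hpq ltac:(lra) Hh HI).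
  - rewrite Rmin_right, Rmax_left in Hh by lra.
    assert (H := RInt_dk_mul_estimate_le h h0 eta q p (opp I) ltac:(lra) ltac:(lra) ltac:(lra)
                   Hh (is_RInt_swap _ _ _ _ HI)).
    change (opp I) with (- I) in H.
    replace (- I - h0 * (k p - k q)) with (- (I - h0 * (k q - k p))) in H by ring.
    replace (k p - k q) with (- (k q - k p)) in H by ring.
    rewrite !Rabs_Ropp in H. exact H.
Qed.

Section Increment.

Variables (F h : R -> R) (t : R).
Hypothesis t_in : a < t < b.
Hypothesis h_cont : continuous h t.
Hypothesis F_increment :
  forall p q, a < p < b -> a < q < b -> is_RInt (fun x => dk x * h x) p q (F q - F p).

Lemma is_lim_increment_ratio : is_lim (fun u => (F u - F t) / (k u - k t)) t (h t).
Proof.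
  intros S [eps HS].
  set (eta := pos_div_2 eps).
  assert (Hloc : locally t (fun x => a < x < b /\ Rabs (h x - h t) <= eta)).
  { apply filter_and.
    - exact (locally_oo a b t t_in).
    - apply (filter_imp (fun x => ball (h t) eta (h x))).
      + intros x Hx. left. exact Hx.
      + apply h_cont, (locally_ball (h t) eta). }
  destruct Hloc as [del Hdel].
  exists del. intros u Hu Hut. apply HS. change (Rabs (u - t) < del) in Hu.
  change (Rabs ((F u - F t) / (k u - k t) - h t) < eps).
  assert (Hu' : a < u < b) by apply (Hdel u Hu).
  assert (Hbetween : forall x, Rmin t u <= x <= Rmax t u -> Rabs (h x - h t) <= eta).
  { intros x Hx. apply (Hdel x). change (Rabs (x - t) < del).
    apply Rle_lt_trans with (Rabs (u - t)); [| exact Hu].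
    destruct (Rle_or_lt t u) as [Htu | Hut'].
    - rewrite Rmin_left, Rmax_right in Hx by lra. rewrite !Rabs_pos_eq; lra.
    - rewrite Rmin_right, Rmax_left in Hx by lra. rewrite !Rabs_left1; lra. }
  assert (Hest := RInt_dk_mul_estimate h (h t) eta t u (F u - F t) t_in Hu' Hbetween
                    (F_increment t u t_in Hu')).
  assert (Hk : k u - k t <> 0) by (apply Rminus_eq_contra, k_injective; auto).
  replace ((F u - F t) / (k u - k t) - h t) with ((F u - F t - h t * (k u - k t)) / (k u - k t))
    by (field; exact Hk).
  rewrite Rabs_div by exact Hk.
  apply Rle_lt_trans with eta; [| simpl; destruct eps; simpl; lra].
  apply Rle_div_l; [apply Rabs_pos_lt, Hk | exact Hest].
Qed.

Lemma is_derive_of_RInt_dk_mul : is_derive F t (h t * dk t).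
Proof.
  apply is_derive_iff_is_lim_quotient.
  assert (H := is_lim_mult (fun u => (F u - F t) / (k u - k t)) (fun u => (k u - k t) / (u - t))
                 t (h t) (dk t) is_lim_increment_ratio
                 (proj1 (is_derive_iff_is_lim_quotient k t (dk t)) (k_derive t t_in)) I).
  eapply is_lim_ext_loc; [| exact H].
  simpl. unfold locally', within.
  apply (filter_imp (fun u => a < u < b)); [| exact (locally_oo a b t t_in)].
  intros u Hu Hut. assert (k u - k t <> 0) by (apply Rminus_eq_contra, k_injective; auto).
  field. split; [lra | assumption].
Qed.

End Increment.

End DerivativeNonvanishing.

Lemma continuous_div_Rpower (f k : R -> R) (c t : R) :
  continuous f t -> continuous k t -> 0 < k t ->
  continuous (fun x => f x / Rpower (k x) c) t.
Proof.
  intros Hf Hk Hkt.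
  apply (continuous_mult f (fun x => / Rpower (k x) c)); [exact Hf |].
  apply continuous_Rinv_comp; [| apply Rgt_not_eq, exp_pos].
  apply (continuous_comp k (fun y => Rpower y c)); [exact Hk |].
  apply continuity_pt_filterlim, derivable_continuous_pt.
  exists (c * Rpower (k t) (c - 1)). apply derivable_pt_lim_power, Hkt.
Qed.

Lemma Dalpha_point_0 (k dk : R -> R) (alpha t : R) : Dalpha_point k dk alpha t 0 = t.
Proof. unfold Dalpha_point. rewrite Rmult_0_l, Rdiv_0_l, exp_0. ring. Qed.

Lemma is_derive_Dalpha_point (k dk : R -> R) (alpha t : R) :
  0 < k t -> dk t <> 0 ->
  is_derive (Dalpha_point k dk alpha t) 0 (Rpower (k t) (1 - alpha) / dk t).
Proof.
  intros Hkt Hdkt. unfold Dalpha_point. auto_derive; [exact I |].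
  replace (1 - alpha) with (1 + - alpha) by ring.
  rewrite Rpower_plus, Rpower_1, !Rmult_0_l, exp_0 by exact Hkt.
  field. exact Hdkt.
Qed.

Lemma is_Dalpha_of_is_derive (k dk F : R -> R) (alpha t l : R) :
  0 < k t -> dk t <> 0 -> is_derive F t l ->
  is_Dalpha k dk alpha F t (Rpower (k t) (1 - alpha) / dk t * l).
Proof.
  intros Hkt Hdkt HF.
  rewrite <- (Dalpha_point_0 k dk alpha t) in HF at 1.
  assert (H := is_derive_comp F _ 0 _ _ HF (is_derive_Dalpha_point k dk alpha t Hkt Hdkt)).
  apply is_derive_iff_is_lim_quotient in H.
  revert H. apply is_lim_ext. intros e.
  rewrite Dalpha_point_0, Rminus_0_r. reflexivity.
Qed.

Theorem mainTheorem6 (a b alpha : R) (k dk f F : R -> R)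
  (Ha : 0 <= a) (Hab : a < b) (Halpha : 0 < alpha < 1)
  (Hkcont : continuous_on_cc k a b)
  (Hknn : forall x, a <= x <= b -> 0 <= k x)
  (Hkder : has_derivative_on_cc k dk a b)
  (Hkne0 : forall x, a <= x <= b -> k x <> 0)
  (Hdkne0 : forall x, a <= x <= b -> dk x <> 0)
  (Hfcont : continuous_on_cc f a b)
  (HF : forall t, a < t <= b -> is_Ialpha k dk alpha f a t (F t)) :
  forall t, a < t < b -> is_Dalpha k dk alpha F t (f t).
Proof.
  intros t Ht.
  assert (Hk : forall x, a < x < b -> is_derive k x (dk x))
    by (intros x Hx; exact (has_derivative_on_cc_interior k dk a b x Hkder Hx)).
  assert (Hdk : forall x, a < x < b -> dk x <> 0) by (intros x Hx; apply Hdkne0; lra).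
  assert (Hkt : 0 < k t) by (specialize (Hknn t ltac:(lra)); specialize (Hkne0 t ltac:(lra)); lra).
  set (h := fun x => f x / Rpower (k x) (1 - alpha)).
  assert (HFint : forall p q, a < p < b -> a < q < b ->
            is_RInt (fun x => dk x * h x) p q (F q - F p)).
  { intros p q Hp Hq. apply (is_RInt_ext (Ialpha_integrand k dk alpha f)).
    - intros x _. exact (Rmult_assoc _ _ _).
    - apply (is_RInt_of_is_RInt_gen_at_right _ a); apply HF; lra. }
  assert (HFt : is_derive F t (h t * dk t)).
  { apply (is_derive_of_RInt_dk_mul k dk a b Hk Hdk F h t Ht); [| exact HFint].
    apply continuous_div_Rpower; [| | exact Hkt].
    - exact (continuous_on_cc_interior f a b t Hfcont Ht).
    - exact (continuous_on_cc_interior k a b t Hkcont Ht). }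
  replace (f t) with (Rpower (k t) (1 - alpha) / dk t * (h t * dk t)).
  - exact (is_Dalpha_of_is_derive k dk F alpha t _ Hkt (Hdk t Ht) HFt).
  - unfold h. field. split; [apply Rgt_not_eq, exp_pos | apply Hdk, Ht].
Qed.
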